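(* Let $m\geq 0$ and $n>1$. There is an injection from $P_3(-m+1,n)$ to $Q_3(m,n)$.
   Context: Partitions are identified with their $m$-Durfee rectangle symbols, defined as follows. - For a partition $\lambda$ of $n$ with $\ell(\lambda)>m$ parts, let $j\geq1$ be the largest integer with $\lambda_{m+j}\geq j$. Let $\alpha$ be the partition whose $i$-th part is the number of $k\leq m+j$ with $\lambda_k\geq j+i$ (the columns right of the $(m+j)\times j$ rectangle). Let $\beta=(\lambda_{m+j+1},\lambda_{m+j+2},\ldots)$ (the rows below the rectangle). - If $\ell(\lambda)\leq m$, set $j=0$, $\alpha=\lambda'$ (the conjugate) and $\beta=\emptyset$. The symbol is written $(\alpha,\beta)_{(m+j)\times j}$, with $\ell(\cdot)$ denoting number of parts. The first part of an empty sequence is taken to be $0$. $P(-m+1,n)$ is the set of partitions of $n$ with rank (largest part minus number of parts) at least $-m+1$. $P_3(-m+1,n)$ is the set of those $(\alpha,\beta)_{(m+j)\times j}\in P(-m+1,n)$ with $j\geq2$ and $\beta_1\leq j-2$. The rank-set of $\lambda=(\lambda_1,\ldots,\lambda_\ell)$ is $[-\lambda_1,1-\lambda_2,\ldots,\ell-1-\lambda_\ell,\ell,\ell+1,\ldots]$. $Q(m,n)$ is the set of partitions of $n$ whose rank-set contains $m$. $Q_3(m,n)$ is the set of $(\gamma,\delta)_{(m+j')\times j'}\in Q(m,n)$ with $j'\geq1$, $\ell(\delta)-\ell(\gamma)\geq 0$ and $\gamma_1=m+j'$. *)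

(* Partitions are represented as nonincreasing sequences
   of positive naturals; lambda_k (1-indexed) is nth 0 lambda (k-1). *)
From mathcomp Require Import all_boot all_order all_algebra.
Set Implicit Arguments. Unset Strict Implicit. Unset Printing Implicit Defensive.
Import Order.TTheory GRing.Theory Num.Theory.

Definition part (l : seq nat) (k : nat) : nat := nth 0 l k.-1.

Definition is_partition (n : nat) (l : seq nat) : bool :=
  [&& sorted geq l, all (fun x => 0 < x) l & sumn l == n].

Definition conjugate (l : seq nat) : seq nat :=
  [seq count (fun x => i <= x) l | i <- iota 1 (head 0 l)].

(* j of the m-Durfee rectangle: 0 if l(lambda) <= m, otherwise the largest
   j >= 1 with lambda_(m+j) >= j (any such j satisfies j <= l(lambda)). *)
Definition durfee (m : nat) (l : seq nat) : nat :=
  if size l <= m then 0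
  else foldr maxn 0 [seq j <- iota 1 (size l) | j <= part l (m + j)].

Definition dalpha (m : nat) (l : seq nat) : seq nat :=
  if size l <= m then conjugate l
  else let j := durfee m l in
    [seq c <- [seq count (fun x => j + i <= x) (take (m + j) l)
               | i <- iota 1 (head 0 l)] | 0 < c].

Definition dbeta (m : nat) (l : seq nat) : seq nat :=
  if size l <= m then [::] else drop (m + durfee m l) l.

(* P(-m+1, n): partitions of n with rank >= -m+1 *)
Definition inP (m n : nat) (l : seq nat) : bool :=
  is_partition n l &&
  ((1 - (m : int) <= (head 0 l : int) - (size l : int))%R).

Definition inP3 (m n : nat) (l : seq nat) : bool :=
  [&& inP m n l, 2 <= durfee m l & head 0 (dbeta m l) <= durfee m l - 2].

Definition in_rankset (r : int) (l : seq nat) : bool :=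
  has (fun i : nat => ((i : int) - (nth 0 l i : int) == r)%R) (iota 0 (size l))
  || ((size l : int) <= r)%R.

Definition inQ (m n : nat) (l : seq nat) : bool :=
  is_partition n l && in_rankset (m : int) l.

Definition inQ3 (m n : nat) (l : seq nat) : bool :=
  [&& inQ m n l, 1 <= durfee m l,
      ((size (dbeta m l) : int) - (size (dalpha m l) : int) >= 0)%R
    & head 0 (dalpha m l) == m + durfee m l].

From mathcomp Require Import all_boot all_order all_algebra.
From mathcomp Require Import zify.
Set Implicit Arguments. Unset Strict Implicit. Unset Printing Implicit Defensive.

(* Split lambda as (lambda_1, A, B), where A = (lambda_2, ..., lambda_(m+j)) are the
   other rows of the (m+j) x j Durfee rectangle and B = beta.  The image [glue] drops
   lambda_1, inserts a part j-1 right after A, adds 1 to every part of B and pads with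
   parts 1 up to length lambda_1 + m + 1.  The new part j-1 at position m+j puts m into
   the rank-set and shrinks the Durfee rectangle to (m+j-1) x (j-1); all rows of A
   still exceed j-1, so alpha_1 = m+j-1, while beta_1 <= j-2 keeps the shifted parts
   of B at most j-1, and the padding makes the new beta longer than the new alpha.
   Hence A, B and, through the length, lambda_1 can be read back off the image, which
   yields the left inverse [fromQ3]. *)

Lemma geq_trans : transitive geq.
Proof. exact: rev_trans leq_trans. Qed.

Lemma sorted_geq_nth (s : seq nat) i k :
  sorted geq s -> i <= k -> nth 0 s k <= nth 0 s i.
Proof.
move=> ss le_ik; have [lt_ks | le_sk] := ltnP k (size s); last by rewrite nth_default.
by apply: (sorted_leq_nth geq_trans leqnn) => //; rewrite inE (leq_ltn_trans le_ik).
Qed.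

Lemma sorted_geq_head (s : seq nat) x : sorted geq s -> x \in s -> x <= head 0 s.
Proof. by move=> ss /(nthP 0) [i _ <-]; rewrite -nth0 sorted_geq_nth. Qed.

Lemma sorted_geq_cat (s1 s2 : seq nat) :
  sorted geq s1 -> sorted geq s2 -> allrel geq s1 s2 -> sorted geq (s1 ++ s2).
Proof. by rewrite !(sorted_pairwise geq_trans) pairwise_cat => -> -> ->. Qed.

Lemma sorted_nseq (T : Type) (r : rel T) n x : reflexive r -> sorted r (nseq n x).
Proof. by move=> r_refl; elim: n => // -[|n] // IH /=; rewrite r_refl. Qed.

Lemma sumn_map_succn (s : seq nat) : sumn (map succn s) = sumn s + size s.
Proof. by elim: s => //= a s ->; rewrite addnS addSn addnA. Qed.

Lemma geq_foldr_maxn (s : seq nat) k : (foldr maxn 0 s <= k) = all (leq^~ k) s.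
Proof. by elim: s => //= a s IH; rewrite geq_max IH. Qed.

Lemma foldr_maxn_mem (s : seq nat) : foldr maxn 0 s \in 0 :: s.
Proof.
elim: s => //= a s; rewrite !inE => IH.
have [_ | _] := leqP a (foldr maxn 0 s); last by rewrite eqxx orbT.
by case/orP: IH => ->; rewrite ?orbT.
Qed.

Lemma leq_foldr_maxn (s : seq nat) x : x \in s -> x <= foldr maxn 0 s.
Proof. by move: (leqnn (foldr maxn 0 s)); rewrite geq_foldr_maxn => /allP; apply. Qed.

Lemma part_gt0_leq_size (s : seq nat) k : 0 < k -> 0 < part s k -> k <= size s.
Proof.
case: k => // k _; rewrite /part /=.
by case: (ltnP k (size s)) => // le_sk; rewrite nth_default.
Qed.

Lemma durfee_le_part m s : 0 < durfee m s ->
  durfee m s <= part s (m + durfee m s) /\ m + durfee m s <= size s.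
Proof.
rewrite /durfee; case: ifP => // _; set d := foldr _ _ _ => d_gt0.
have := foldr_maxn_mem [seq j <- iota 1 (size s) | j <= part s (m + j)].
rewrite -/d inE gtn_eqF // mem_filter => /andP [d_le _]; split=> //.
by apply: part_gt0_leq_size (leq_trans d_gt0 d_le); rewrite addn_gt0 d_gt0 orbT.
Qed.

Lemma durfee_unique m s d : sorted geq s -> 0 < d ->
  d <= part s (m + d) -> part s (m + d).+1 <= d -> durfee m s = d.
Proof.
move=> ss d_gt0 d_le le_d.
have le_size : m + d <= size s.
  by apply: part_gt0_leq_size (leq_trans d_gt0 d_le); rewrite addn_gt0 d_gt0 orbT.
rewrite /durfee ifF; last by apply/negbTE; rewrite -ltnNge; lia.
apply/eqP; rewrite eqn_leq geq_foldr_maxn; apply/andP; split.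
  apply/allP => y; rewrite mem_filter => /andP [y_le _]; rewrite leqNgt.
  apply/negP => lt_dy; have : part s (m + y) <= part s (m + d).+1.
    by rewrite /part sorted_geq_nth //; lia.
  lia.
by apply: leq_foldr_maxn; rewrite mem_filter d_le mem_iota; lia.
Qed.

Lemma size_dalpha m s : sorted geq s -> m < size s ->
  size (dalpha m s) <= head 0 s - durfee m s.
Proof.
move=> ss lt_ms; rewrite /dalpha (leqNgt (size s)) lt_ms /=.
rewrite size_filter count_map -size_filter -[X in _ <= X](size_iota 1).
apply: uniq_leq_size; first exact/filter_uniq/iota_uniq.
move=> i; rewrite mem_filter mem_iota /preim /= -has_count.
case/andP => /hasP [x /mem_take x_in le_x]; rewrite !mem_iota.
by have := sorted_geq_head ss x_in; lia.
Qed.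

Definition glue (m h j : nat) (A B : seq nat) : seq nat :=
  A ++ j.-1 :: map succn B ++ nseq (h + m - size (A ++ B)) 1.

Definition toQ3 (m : nat) (l : seq nat) : seq nat :=
  let j := durfee m l in glue m (head 0 l) j (take (m + j).-1 (behead l)) (drop (m + j) l).

Definition fromQ3 (m : nat) (u : seq nat) : seq nat :=
  let j := durfee m u in
  (size u - m - 1) :: take (m + j) u
    ++ map predn (filter (fun x => 1 < x) (drop (m + j).+1 u)).

Section Glue.

Variables (m h j : nat) (A B : seq nat).
Hypotheses (j_gt1 : 1 < j) (size_A : size A = (m + j).-1).
Hypotheses (sorted_l : sorted geq (h :: A ++ B)) (A_ge : all (leq j) A).
Hypotheses (B_gt0 : all (fun x => 0 < x) B) (head_B : head 0 B <= j - 2).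
Hypothesis size_AB : size (A ++ B) <= h + m.

Local Notation c := (h + m - size (A ++ B)).
Local Notation tail := (map succn B ++ nseq c 1).
Local Notation u := (glue m h j A B).

Let size_A_eq : size A = m + j.-1.
Proof. by rewrite size_A; lia. Qed.

Let sorted_A : sorted geq A.
Proof. by have /path_sorted/cat_sorted2[] := sorted_l. Qed.

Let sorted_B : sorted geq B.
Proof. by have /path_sorted/cat_sorted2[] := sorted_l. Qed.

Let A_le_h : all (geq h) A.
Proof.
by have := order_path_min geq_trans sorted_l; rewrite all_cat => /andP[].
Qed.

Let tail_le : all (geq j.-1) tail.
Proof.
rewrite all_cat all_map all_nseq; apply/andP; split; last by apply/orP; right => /=; lia.
apply/allP => x x_in /=; have := sorted_geq_head sorted_B x_in; lia.
Qed.

Lemma size_glue : size u = h + m + 1.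
Proof.
rewrite size_cat /= size_cat size_map size_nseq.
by move: size_AB; rewrite size_cat; lia.
Qed.

Lemma sumn_glue : sumn u = h + sumn (A ++ B).
Proof.
rewrite /glue !sumn_cat /= sumn_cat sumn_map_succn sumn_nseq.
by move: size_AB; rewrite size_cat; lia.
Qed.

Lemma glue_gt0 : all (fun x => 0 < x) u.
Proof.
rewrite /glue all_cat /= all_cat all_map all_nseq orbT andbT; apply/and3P; split.
- by apply: sub_all A_ge => x; lia.
- lia.
- by apply/allP.
Qed.

Lemma sorted_glue : sorted geq u.
Proof.
apply: sorted_geq_cat => //.
  rewrite /= (path_sortedE geq_trans) tail_le /=.
  apply: sorted_geq_cat; [ | exact/sorted_nseq/leqnn | ].
    by rewrite sorted_map; apply: sub_sorted sorted_B => x y /= le_yx; lia.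
  by apply/allrelP => _ y /mapP[b _ ->] /nseqP[-> _].
apply/allrelP => x y /(allP A_ge) le_jx.
by rewrite inE => /predU1P[-> | /(allP tail_le)] /=; lia.
Qed.

Lemma take_glue : take (m + j.-1) u = A.
Proof. exact: take_size_cat. Qed.

Lemma drop_glue : drop (m + j.-1).+1 u = tail.
Proof. by rewrite /glue -cat_rcons drop_size_cat // size_rcons size_A_eq. Qed.

Lemma durfee_glue : durfee m u = j.-1.
Proof.
apply: durfee_unique sorted_glue _ _ _; first lia.
  rewrite /part -size_A_eq nth_cat ifT; last lia.
  have /(allP A_ge) : nth 0 A (size A).-1 \in A.
    by apply: mem_nth; rewrite size_A_eq; lia.
  lia.
by rewrite /part /= -size_A_eq nth_cat ltnn subnn.
Qed.

Lemma rankset_glue : in_rankset m u.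
Proof.
apply/orP; left; apply/hasP; exists (size A).
  by rewrite mem_iota size_glue; move: size_AB; rewrite size_cat; lia.
by rewrite nth_cat ltnn subnn /=; apply/eqP; lia.
Qed.

Let head_glue_bounds : j <= head 0 u <= h.
Proof.
case: A size_A_eq A_ge A_le_h => [|a A'] /=; first lia.
by move=> _ /andP[-> _] /andP[].
Qed.

Lemma head_dalpha_glue : head 0 (dalpha m u) = m + durfee m u.
Proof.
rewrite /dalpha ifN -?ltnNge ?size_glue ?durfee_glue ?take_glue; last lia.
have count_A : count (leq (j.-1 + 1)) A = size A.
  by apply/eqP; rewrite -all_count; apply: sub_all A_ge => x /=; lia.
case: (head 0 u) head_glue_bounds => [|a] a_bounds; first lia.
by rewrite /= count_A size_A_eq; case: ifP => //; lia.
Qed.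

Lemma dalpha_le_dbeta_glue : size (dalpha m u) <= size (dbeta m u).
Proof.
have : size (dalpha m u) <= head 0 u - durfee m u.
  by apply: size_dalpha sorted_glue _; rewrite size_glue; lia.
rewrite /dbeta size_glue; case: ifP => [|_]; first lia.
rewrite size_drop size_glue durfee_glue.
by have := head_glue_bounds; lia.
Qed.

Lemma fromQ3_glue : fromQ3 m u = h :: A ++ B.
Proof.
rewrite /fromQ3 durfee_glue size_glue take_glue drop_glue filter_cat filter_nseq /= cats0.
rewrite (all_filterP _) ?all_map; last by apply: sub_all B_gt0 => x /=.
by rewrite (mapK succnK); congr (_ :: _); lia.
Qed.

Lemma inQ3_glue n : sumn (h :: A ++ B) = n -> inQ3 m n u.
Proof.
move=> sum_l; apply/and4P; split.
- by rewrite /inQ /is_partition sorted_glue glue_gt0 sumn_glue -sum_l eqxx rankset_glue.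
- by rewrite durfee_glue; lia.
- by have := dalpha_le_dbeta_glue; lia.
- by rewrite head_dalpha_glue.
Qed.

End Glue.

Lemma cons_take_behead_drop (l : seq nat) k :
  0 < k <= size l -> l = head 0 l :: take k.-1 (behead l) ++ drop k l.
Proof. by case: l => [|x t] /=; [lia | case: k => //= k _; rewrite cat_take_drop]. Qed.

Lemma toQ3_spec m n l : inP3 m n l -> inQ3 m n (toQ3 m l) /\ fromQ3 m (toQ3 m l) = l.
Proof.
case/and3P => /andP[/and3P[sorted_l l_gt0 /eqP sum_l] rank] j_gt1 head_beta.
have [j_le_part rect_le_size] := durfee_le_part (ltnW j_gt1).
set j := durfee m l in j_gt1 head_beta j_le_part rect_le_size *.
have El : l = head 0 l :: take (m + j).-1 (behead l) ++ drop (m + j) l.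
  by apply: cons_take_behead_drop; lia.
set h := head 0 l in El rank *; set A := take _ _ in El *.
set B := drop _ l in El head_beta *.
have size_A : size A = (m + j).-1 by rewrite size_takel // size_behead; lia.
have A_ge : all (leq j) A.
  apply/allP => x /(nthP 0)[i]; rewrite size_A => lt_i <-.
  rewrite nth_take // nth_behead; apply: leq_trans j_le_part _.
  by rewrite /part sorted_geq_nth //; lia.
have B_gt0 : all (fun x => 0 < x) B by apply/allP => x /mem_drop/(allP l_gt0).
rewrite /dbeta ifN in head_beta; last by rewrite -ltnNge; lia.
have size_AB : size (A ++ B) <= h + m by move: rank; rewrite {1}El /=; lia.
rewrite /toQ3 -/j -/h -/A -/B.
rewrite El in sorted_l sum_l; split; [exact: inQ3_glue | rewrite fromQ3_glue // -El].
Qed.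

Theorem lemma2p6 (m n : nat) : 1 < n ->
  exists f : seq nat -> seq nat,
    (forall l, inP3 m n l -> inQ3 m n (f l)) /\
    (forall l1 l2, inP3 m n l1 -> inP3 m n l2 -> f l1 = f l2 -> l1 = l2).
Proof.
move=> _; exists (toQ3 m); split=> [l /toQ3_spec[] // | l1 l2].
by move=> /toQ3_spec[_ K1] /toQ3_spec[_ K2] E; rewrite -K1 E K2.
Qed.
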